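(* Let $(\mathcal{X},\kappa)$ and $(\mathcal{Y},\lambda)$ be finite similarity spaces with Gram matrices $\mathbf{K}$ and $\mathbf{\Lambda}$, and let $(X,Y)$ be a random pair with values in $\mathcal{X}\times\mathcal{Y}$. Then $$\mathbb{H}^{\mathbf{K}}[X]=\mathbb{H}^{\mathbf{K}\otimes\mathbf{J}}[X,Y]\le\mathbb{H}^{\mathbf{K}\otimes\mathbf{\Lambda}}[X,Y]\le\mathbb{H}^{\mathbf{K}\otimes\mathbf{I}}[X,Y]=\mathbb{H}^{\mathbf{I}}[Y]+\mathbb{H}^{\mathbf{K},\mathbf{I}}[X\mid Y].$$
   Context: A finite similarity space $(\mathcal{X},\kappa)$ is a finite set with a symmetric $\kappa:\mathcal{X}\times\mathcal{X}\to[0,1]$ with $\kappa(x,x)=1$; its Gram matrix is $\mathbf{K}_{x,y}=\kappa(x,y)$. For a distribution $\mathbb{P}$ on $\mathcal{X}$, $(\mathbf{K}\mathbb{P})(x)=\sum_y\kappa(x,y)\mathbb{P}(y)$ and the GAIT entropy is $\mathbb{H}^{\mathbf{K}}[\mathbb{P}]=-\sum_x\mathbb{P}(x)\log(\mathbf{K}\mathbb{P})(x)$ (with $0\log0=0$); $\mathbb{H}^{\mathbf{K}}[X]$ is the GAIT entropy of the law of $X$. On $\mathcal{Y}$, $\mathbf{J}$ denotes the all-ones kernel ($\lambda\equiv1$) and $\mathbf{I}$ the identity kernel ($1$ on the diagonal, $0$ elsewhere). For kernels with Gram matrices $\mathbf{K},\mathbf{\Lambda}$, $\mathbb{H}^{\mathbf{K}\otimes\mathbf{\Lambda}}[X,Y]$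 is the GAIT entropy of the joint law of $(X,Y)$ with respect to the product kernel $\kappa(x,x')\lambda(y,y')$, and the conditional entropy is $\mathbb{H}^{\mathbf{K},\mathbf{\Lambda}}[X\mid Y]=\mathbb{H}^{\mathbf{K}\otimes\mathbf{\Lambda}}[X,Y]-\mathbb{H}^{\mathbf{\Lambda}}[Y]$. *)

From HB Require Import structures.
From mathcomp Require Import all_boot all_order all_algebra.
From mathcomp Require Import all_classical all_reals all_analysis.
Set Implicit Arguments. Unset Strict Implicit. Unset Printing Implicit Defensive.
Import Order.TTheory GRing.Theory Num.Theory.
Local Open Scope ring_scope.

Section GAIT.
Variable R : realType.

Definition is_similarity (T : finType) (kappa : T -> T -> R) : Prop :=
  [/\ forall x y, kappa x y = kappa y x,
      forall x y, 0 <= kappa x y <= 1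
    & forall x, kappa x x = 1].

Definition is_distribution (T : finType) (P : T -> R) : Prop :=
  (forall x, 0 <= P x) /\ \sum_x P x = 1.

Definition kmul (T : finType) (kappa : T -> T -> R) (P : T -> R) (x : T) : R :=
  \sum_y kappa x y * P y.

Definition gait_entropy (T : finType) (kappa : T -> T -> R) (P : T -> R) : R :=
  - \sum_(x | P x != 0) P x * ln (kmul kappa P x).

Definition prod_kernel (X Y : finType) (kappa : X -> X -> R) (lambda : Y -> Y -> R)
  (a b : X * Y) : R := kappa a.1 b.1 * lambda a.2 b.2.

Definition J_kernel (T : finType) (x y : T) : R := 1.
Definition I_kernel (T : finType) (x y : T) : R := (x == y)%:R.

Definition marg1 (X Y : finType) (P : X * Y -> R) (x : X) : R := \sum_y P (x, y).
Definition marg2 (X Y : finType) (P : X * Y -> R) (y : Y) : R := \sum_x P (x, y).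

Definition cond_entropy (X Y : finType) (kappa : X -> X -> R) (lambda : Y -> Y -> R)
  (P : X * Y -> R) : R :=
  gait_entropy (prod_kernel kappa lambda) P - gait_entropy lambda (marg2 P).

End GAIT.

From HB Require Import structures.
From mathcomp Require Import all_boot all_order all_algebra.
From mathcomp Require Import all_classical all_reals all_analysis.
Set Implicit Arguments. Unset Strict Implicit. Unset Printing Implicit Defensive.
Import Order.TTheory GRing.Theory Num.Theory.
Local Open Scope ring_scope.

(* The GAIT entropy decreases when the kernel increases pointwise, since [ln]
   is monotone; the kernels J, Lambda, I on Y are pointwise decreasing, and
   tensoring with J merely integrates Y out of the joint law. *)

Section GaitEntropy.
Variables (R : realType) (T : finType).
Implicit Types (k : T -> T -> R) (P : T -> R).

Lemma gait_entropyE k P : gait_entropy k P = - \sum_x P x * ln (kmul k P x).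
Proof.
rewrite /gait_entropy big_mkcond /=; congr (- _); apply: eq_bigr => x _.
by case: eqP => // ->; rewrite mul0r.
Qed.

Lemma kmul_gt0 k P a :
  (forall b c, 0 <= k b c) -> 0 < k a a -> (forall b, 0 <= P b) -> 0 < P a ->
  0 < kmul k P a.
Proof.
move=> k_ge0 kaa_gt0 P_ge0 Pa_gt0; rewrite /kmul (bigD1 a) //=.
by rewrite ltr_pwDl ?mulr_gt0 // sumr_ge0 // => b _; rewrite mulr_ge0.
Qed.

Lemma gait_entropy_le_kernel k1 k2 P :
  (forall a b, 0 <= k1 a b) -> (forall a b, k1 a b <= k2 a b) ->
  (forall a, 0 < k1 a a) -> (forall a, 0 <= P a) ->
  gait_entropy k2 P <= gait_entropy k1 P.
Proof.
move=> k1_ge0 le_k12 k1_diag P_ge0; rewrite /gait_entropy lerN2.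
apply: ler_sum => a Pa_neq0.
have Pa_gt0 : 0 < P a by rewrite lt_def Pa_neq0 P_ge0.
have k1Pa_gt0 := kmul_gt0 k1_ge0 (k1_diag a) P_ge0 Pa_gt0.
have le_kmul : kmul k1 P a <= kmul k2 P a.
  by apply: ler_sum => b _; rewrite ler_wpM2r.
rewrite ler_wpM2l ?P_ge0 // ler_ln ?posrE //.
exact: lt_le_trans le_kmul.
Qed.

End GaitEntropy.

Section ProductKernel.
Variables (R : realType) (X Y : finType) (kappa : X -> X -> R).

Lemma sum_pair (G : X * Y -> R) : \sum_p G p = \sum_x \sum_y G (x, y).
Proof. by rewrite pair_bigA; apply: eq_bigr => -[]. Qed.

Lemma kmul_prod_J_kernel (P : X * Y -> R) x y :
  kmul (prod_kernel kappa (@J_kernel R Y)) P (x, y) = kmul kappa (marg1 P) x.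
Proof.
rewrite /kmul sum_pair; apply: eq_bigr => a _.
rewrite /marg1 mulr_sumr; apply: eq_bigr => b _.
by rewrite /prod_kernel /J_kernel mulr1.
Qed.

Lemma gait_entropy_prod_J_kernel (P : X * Y -> R) :
  gait_entropy (prod_kernel kappa (@J_kernel R Y)) P =
  gait_entropy kappa (marg1 P).
Proof.
rewrite !gait_entropyE sum_pair; congr (- _); apply: eq_bigr => x _.
under eq_bigr => y _ do rewrite kmul_prod_J_kernel.
by rewrite -mulr_suml.
Qed.

Lemma prod_kernel_le2r (lambda1 lambda2 : Y -> Y -> R) a b :
  (forall x x', 0 <= kappa x x') -> (forall y y', lambda1 y y' <= lambda2 y y') ->
  prod_kernel kappa lambda1 a b <= prod_kernel kappa lambda2 a b.
Proof. by move=> kappa_ge0 le_lambda; rewrite ler_wpM2l. Qed.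

Lemma gait_entropy_chain_rule (lambda : Y -> Y -> R) (P : X * Y -> R) :
  gait_entropy (prod_kernel kappa lambda) P =
  gait_entropy lambda (marg2 P) + cond_entropy kappa lambda P.
Proof. by rewrite /cond_entropy addrC subrK. Qed.

End ProductKernel.

Section Similarity.
Variables (R : realType) (T : finType) (kappa : T -> T -> R).
Hypothesis kappa_sim : is_similarity kappa.

Lemma similarity_ge0 x y : 0 <= kappa x y.
Proof. by case: kappa_sim => _ /(_ x y) /andP[]. Qed.

Lemma similarity_le_J_kernel x y : kappa x y <= J_kernel R x y.
Proof. by case: kappa_sim => _ /(_ x y) /andP[]. Qed.

Lemma similarity_diag_gt0 x : 0 < kappa x x.
Proof. by case: kappa_sim => _ _ ->; rewrite ltr01. Qed.

Lemma I_kernel_le_similarity x y : I_kernel R x y <= kappa x y.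
Proof.
rewrite /I_kernel; case: eqP => [->|_]; last exact: similarity_ge0.
by case: kappa_sim => _ _ ->.
Qed.

End Similarity.

Lemma similarity_prod (R : realType) (X Y : finType)
    (kappa : X -> X -> R) (lambda : Y -> Y -> R) :
  is_similarity kappa -> is_similarity lambda ->
  is_similarity (prod_kernel kappa lambda).
Proof.
move=> [ks kb kd] [ls lb ld]; split => [a b|a b|a].
- by rewrite /prod_kernel ks ls.
- case/andP: (kb a.1 b.1) => k0 k1; case/andP: (lb a.2 b.2) => l0 l1.
  by rewrite mulr_ge0 //= mulr_ile1.
- by rewrite /prod_kernel kd ld mulr1.
Qed.

Lemma I_kernel_similarity (R : realType) (T : finType) :
  is_similarity (@I_kernel R T).
Proof.
split=> [x y|x y|x]; rewrite /I_kernel ?eqxx //; first by rewrite eq_sym.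
by case: eqP; rewrite ?lexx ?ler01.
Qed.

Theorem theorem7 (R : realType) (X Y : finType)
  (kappa : X -> X -> R) (lambda : Y -> Y -> R) (P : X * Y -> R) :
  is_similarity kappa -> is_similarity lambda -> is_distribution P ->
  [/\ gait_entropy kappa (marg1 P) = gait_entropy (prod_kernel kappa (@J_kernel R Y)) P,
      gait_entropy (prod_kernel kappa (@J_kernel R Y)) P
        <= gait_entropy (prod_kernel kappa lambda) P,
      gait_entropy (prod_kernel kappa lambda) P
        <= gait_entropy (prod_kernel kappa (@I_kernel R Y)) P
    & gait_entropy (prod_kernel kappa (@I_kernel R Y)) P
        = gait_entropy (@I_kernel R Y) (marg2 P) + cond_entropy kappa (@I_kernel R Y) P].
Proof.
move=> kappa_sim lambda_sim [P_ge0 _].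
have kappa_ge0 := similarity_ge0 kappa_sim.
have kappaL_sim := similarity_prod kappa_sim lambda_sim.
have kappaI_sim := similarity_prod kappa_sim (@I_kernel_similarity R Y).
split.
- by rewrite gait_entropy_prod_J_kernel.
- apply: (gait_entropy_le_kernel (similarity_ge0 kappaL_sim) _
    (similarity_diag_gt0 kappaL_sim) P_ge0) => a b.
  exact: prod_kernel_le2r kappa_ge0 (similarity_le_J_kernel lambda_sim).
- apply: (gait_entropy_le_kernel (similarity_ge0 kappaI_sim) _
    (similarity_diag_gt0 kappaI_sim) P_ge0) => a b.
  exact: prod_kernel_le2r kappa_ge0 (I_kernel_le_similarity lambda_sim).
- exact: gait_entropy_chain_rule.
Qed.
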